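(* Let $(G,I,O)$ be a geometry with $|I|=|O|$. If $(G,I,O)$ has a causal path cover $\mathcal C$, then $\mathcal C$ is the unique maximum-size collection of pairwise vertex-disjoint directed paths in $G$ from $I$ to $O$ (i.e. any collection of pairwise vertex-disjoint directed paths, each starting in $I$ and ending in $O$, of maximum cardinality, equals $\mathcal C$).
   Context: Graphs are finite, simple, undirected, without self-loops; $v\sim w$ denotes adjacency. A geometry is $(G,I,O)$ with $I,O\subseteq V(G)$. A directed path in $G$ is a sequence of distinct vertices $u_0,\ldots,u_\ell$ ($\ell\ge0$, $\ell=0$ allowed) with consecutive vertices adjacent, oriented by arcs $u_i\to u_{i+1}$; an $I$–$O$ path starts in $I$ and ends in $O$. A path cover of $(G,I,O)$ is a collection of directed paths in $G$ such that every vertex lies on exactly one path, each path meets $I$ at most at its initial vertex, and each path meets $O$ exactly at its final vertex. For a family $\mathcal P$ of vertex-disjoint directed paths, an edge is covered by $\mathcal P$ if it underlies an arc of a path of $\mathcal P$. An influencing walk for $\mathcal P$ is a walk that is a concatenation of zero or more segments of the types (i) $v\to w$, an arc of a path of $\mathcal P$; (ii) $v\to z\to w$ with $v\to z$ an arc of a path of $\mathcal P$ and $zw\in E(G)$ not covered by $\mathcal P$. A vicious circuit for $\mathcal P$ is a closed influencing walk with at least one segment. A causal path cover is a path cover having no vicious circuits. *)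

(* A simple graph on a finite vertex type T is a symmetric,
   irreflexive boolean relation e. *)
From mathcomp Require Import all_boot.
Set Implicit Arguments. Unset Strict Implicit. Unset Printing Implicit Defensive.

Section Geometry.
Variables (T : finType) (e : rel T).

Definition dpath (p : seq T) : bool :=
  if p is x :: s then path e x s && uniq p else false.

Definition IO_path (I O : {set T}) (p : seq T) : bool :=
  if p is x :: s then [&& dpath p, x \in I & last x s \in O] else false.

Definition vdisjoint (P : seq (seq T)) : bool :=
  all dpath P && uniq (flatten P).

Definition disjoint_IO_paths (I O : {set T}) (P : seq (seq T)) : bool :=
  all (IO_path I O) P && uniq (flatten P).

Definition path_cover (I O : {set T}) (P : seq (seq T)) : Prop :=
  all dpath P /\
  (forall v : T, count (fun p => v \in p) P = 1) /\
  (forall p, p \in P -> forall x s, p = x :: s ->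
       (forall v, v \in s -> v \notin I) /\
       last x s \in O /\
       (forall v, v \in belast x s -> v \notin O)).

Definition arc (P : seq (seq T)) (v w : T) : bool :=
  has (fun p => (v, w) \in zip p (behead p)) P.

Definition covered (P : seq (seq T)) (u w : T) : bool :=
  arc P u w || arc P w u.

Definition inf_seg (P : seq (seq T)) (v w : T) : bool :=
  arc P v w || [exists z, [&& arc P v z, e z w & ~~ covered P z w]].

(* A vicious circuit: a closed influencing walk with at least one segment,
   given by its sequence of segment endpoints v = w_0, w_1, ..., w_k = v. *)
Definition has_vicious_circuit (P : seq (seq T)) : Prop :=
  exists (v : T) (s : seq T), s <> [::] /\ path (inf_seg P) v s /\ last v s = v.

Definition causal_path_cover (I O : {set T}) (P : seq (seq T)) : Prop :=
  path_cover I O P /\ ~ has_vicious_circuit P.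

End Geometry.

(* Let C be a causal path cover of (G,I,O) with |I| = |O|.  Every path of C
   ends in O, and every vertex of I lies on C, necessarily at the start of its
   path; counting endpoints, C consists of |I| disjoint I-O paths, while no
   family of disjoint I-O paths has more than |I| members.

   For uniqueness let D be a maximum family, so that every vertex of O ends a
   path of D.  Write s x for the successor of x on C (x outside O) and p y for
   the predecessor of y on D.  The rerouting map sending x outside O to
   p (s x) when s x lies on D, and to s x otherwise, is injective, and each
   vertex it moves influences its image: by the arc x -> s x, followed if
   needed by the edge between s x and p (s x).  Following an orbit would
   close a vicious circuit, so the map is the identity.  Hence every arc
   u -> w of D satisfies w = s u: a path of D follows C from its start in I
   until it first reaches O, exactly like the path of C through that start.
   So D is contained in C, and by cardinality D is a permutation of C. *)

From mathcomp Require Import all_boot.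
(* Imported last, so that Defs.arc is not shadowed by path.arc. *)
From Pilot Require Import Defs.
Set Implicit Arguments. Unset Strict Implicit. Unset Printing Implicit Defensive.

Section SeqArcs.
Variable T : eqType.
Implicit Types (a u v w : T) (s : seq T).

Lemma arc_tail_belast a s u w : (u, w) \in zip (a :: s) s -> u \in belast a s.
Proof.
elim: s a => [|b s IH] a //=; rewrite inE => /orP[/eqP[-> _]|/IH ->].
  by rewrite eqxx.
by rewrite orbT.
Qed.

Lemma arc_head_behead a s u w : (u, w) \in zip (a :: s) s -> w \in s.
Proof.
elim: s a => [|b s IH] a //=; rewrite inE => /orP[/eqP[_ ->]|/IH ->].
  by rewrite eqxx.
by rewrite orbT.
Qed.

Lemma belast_arc a s u : u \in belast a s -> exists w, (u, w) \in zip (a :: s) s.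
Proof.
elim: s a => [|b s IH] a //=; rewrite inE => /orP[/eqP->|/IH[w Hw]].
  by exists b; rewrite mem_head.
by exists w; rewrite inE Hw orbT.
Qed.

Lemma behead_arc a s w : w \in s -> exists u, (u, w) \in zip (a :: s) s.
Proof.
elim: s a => [|b s IH] a //=; rewrite inE => /orP[/eqP->|/(IH b)[u Hu]].
  by exists a; rewrite mem_head.
by exists u; rewrite inE Hu orbT.
Qed.

Lemma uniq_arc_succ a s u w w' : uniq (a :: s) ->
  (u, w) \in zip (a :: s) s -> (u, w') \in zip (a :: s) s -> w = w'.
Proof.
elim: s a => [|b s IH] a //= /andP[aNs Us].
rewrite !inE => /orP[/eqP[Eu Ew]|Hw] /orP[/eqP[Eu' Ew']|Hw']; subst => //.
- by move: aNs; rewrite (mem_belast (arc_tail_belast Hw')).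
- by move: aNs; rewrite (mem_belast (arc_tail_belast Hw)).
- exact: IH Hw Hw'.
Qed.

Lemma uniq_arc_pred a s u u' w : uniq (a :: s) ->
  (u, w) \in zip (a :: s) s -> (u', w) \in zip (a :: s) s -> u = u'.
Proof.
elim: s a => [|b s IH] a //= /andP[_ Us]; move: (Us) => /andP[bNs _].
rewrite !inE => /orP[/eqP[Eu Ew]|Hu] /orP[/eqP[Eu' Ew']|Hu']; subst => //.
- by move: bNs; rewrite (arc_head_behead Hu').
- by move: bNs; rewrite (arc_head_behead Hu).
- exact: IH Hu Hu'.
Qed.

Lemma path_arcsP (r : rel T) a s :
  reflect (forall u w, (u, w) \in zip (a :: s) s -> r u w) (path r a s).
Proof.
apply: (iffP idP).
  elim: s a => [|b s IH] a //= /andP[rab rs] u w.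
  by rewrite inE => /orP[/eqP[-> ->] //|]; apply: IH.
elim: s a => [|b s IH] a //= Hr; rewrite Hr ?mem_head //=.
by apply: IH => u w Huw; apply: Hr; rewrite inE Huw orbT.
Qed.

Lemma fpath_first_hit_unique (g : T -> T) (Q : pred T) a s s' :
  fpath g a s -> {in belast a s, forall v, ~~ Q v} -> Q (last a s) ->
  fpath g a s' -> {in belast a s', forall v, ~~ Q v} -> Q (last a s') ->
  s = s'.
Proof.
elim: s a s' => [|b s IH] a [|b' s'] //=.
- by move=> _ _ Qa _ NQ' _; move: (NQ' a (mem_head _ _)); rewrite Qa.
- by move=> _ NQ _ _ _ Qa; move: (NQ a (mem_head _ _)); rewrite Qa.
move=> /andP[/eqP<- gs] NQ Qs /andP[/eqP<- gs'] NQ' Qs'; congr cons.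
by apply: (IH (g a)) => // v Hv; [apply: NQ | apply: NQ']; rewrite inE Hv orbT.
Qed.

End SeqArcs.

Section DisjointPaths.
Variables (T : finType) (e : rel T).
Implicit Types (P : seq (seq T)) (p : seq T) (u v w x y : T).

Lemma dpath_cons P p : all (dpath e) P -> p \in P -> exists a s, p = a :: s.
Proof. by move=> /allP dP /dP; case: p => // a s _; exists a, s. Qed.

Lemma flatten_mem_unique P p q v :
  uniq (flatten P) -> p \in P -> q \in P -> v \in p -> v \in q -> p = q.
Proof.
elim: P => [|r P IH] //=; rewrite cat_uniq => /and3P[_ rNP UP].
rewrite !inE => /orP[/eqP->|pP] /orP[/eqP->|qP] vp vq //.
- by case/negP: rNP; apply/hasP; exists v => //; apply/flattenP; exists q.
- by case/negP: rNP; apply/hasP; exists v => //; apply/flattenP; exists p.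
- exact: IH.
Qed.

Lemma flatten_uniq_mem P p : uniq (flatten P) -> p \in P -> uniq p.
Proof.
elim: P => [|r P IH] //=; rewrite cat_uniq => /and3P[Ur _ UP].
by rewrite inE => /orP[/eqP->|/IH]; [|apply].
Qed.

Lemma arcP P v w :
  reflect (exists (a : T) (s : seq T), a :: s \in P /\ (v, w) \in zip (a :: s) s)
          (arc P v w).
Proof.
apply: (iffP hasP) => [[[|a s] //= pP vw]|[a [s [pP vw]]]]; first by exists a, s.
by exists (a :: s).
Qed.

Lemma arc_succ_unique P v w w' :
  uniq (flatten P) -> arc P v w -> arc P v w' -> w = w'.
Proof.
move=> U /arcP[a [s [pP vw]]] /arcP[a' [s' [pP' vw']]].
have E : a :: s = a' :: s'.
  exact: flatten_mem_unique U pP pP' (mem_belast (arc_tail_belast vw))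
    (mem_belast (arc_tail_belast vw')).
by case: E vw' => <- <- vw'; apply: uniq_arc_succ (flatten_uniq_mem U pP) vw vw'.
Qed.

Lemma arc_pred_unique P v v' w :
  uniq (flatten P) -> arc P v w -> arc P v' w -> v = v'.
Proof.
move=> U /arcP[a [s [pP vw]]] /arcP[a' [s' [pP' vw']]].
have E : a :: s = a' :: s'.
  by apply: (flatten_mem_unique (v := w)) U pP pP' _ _;
     rewrite inE ?(arc_head_behead vw) ?(arc_head_behead vw') orbT.
by case: E vw' => <- <- vw'; apply: uniq_arc_pred (flatten_uniq_mem U pP) vw vw'.
Qed.

Lemma arc_edge P v w : all (dpath e) P -> arc P v w -> e v w.
Proof.
move=> /allP dP /arcP[a [s [pP vw]]]; have /andP[path_as _] := dP _ pP.
exact: (path_arcsP _ _ _ path_as).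
Qed.

Lemma arc_mem_flatten P v w : arc P v w -> v \in flatten P /\ w \in flatten P.
Proof.
move=> /arcP[a [s [pP vw]]]; split; apply/flattenP; exists (a :: s) => //.
  exact: mem_belast (arc_tail_belast vw).
by rewrite inE (arc_head_behead vw) orbT.
Qed.

(* The successor and predecessor of a vertex along a family of paths (the
   vertex itself when it has none). *)
Definition succ_on P x : T := odflt x [pick y | arc P x y].
Definition pred_on P y : T := odflt y [pick x | arc P x y].

Lemma arc_succ_on P x y : uniq (flatten P) -> arc P x y -> succ_on P x = y.
Proof.
move=> U xy; rewrite /succ_on; case: pickP => [y' xy' /=|/(_ y)]; last by rewrite xy.
exact: arc_succ_unique U xy' xy.
Qed.

Lemma arc_pred_on P x y : uniq (flatten P) -> arc P x y -> pred_on P y = x.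
Proof.
move=> U xy; rewrite /pred_on; case: pickP => [x' x'y /=|/(_ x)]; last by rewrite xy.
exact: arc_pred_unique U x'y xy.
Qed.

Definition olast p : option T := if p is x :: s then Some (last x s) else None.

Lemma dpath_ends P : all (dpath e) P ->
  {in P, forall p, (exists2 x, ohead p = Some x & x \in p) /\
                   (exists2 x, olast p = Some x & x \in p)}.
Proof.
move=> dP p /(dpath_cons dP)[a [s ->]].
by split; [exists a; rewrite ?mem_head | exists (last a s); rewrite ?mem_last].
Qed.

Lemma uniq_endpoints (f : seq T -> option T) P :
  {in P, forall p, exists2 x, f p = Some x & x \in p} ->
  uniq (flatten P) -> uniq (map f P).
Proof.
elim: P => [|q P IH] //= fP; rewrite cat_uniq => /and3P[_ qNP UP].
have fP' : {in P, forall p, exists2 x, f p = Some x & x \in p}.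
  by move=> p pP; apply: fP; rewrite inE pP orbT.
rewrite IH // andbT; apply/mapP=> -[q' q'P]; have [x -> xq] := fP q (mem_head _ _).
have [x' -> x'q' [Ex]] := fP q' (mem_behead (s := q :: P) q'P); rewrite -Ex in x'q'.
by case/negP: qNP; apply/hasP; exists x => //; apply/flattenP; exists q'.
Qed.

Lemma vdisjoint_heads P : vdisjoint e P -> uniq (map ohead P).
Proof.
by case/andP=> dP U; apply: uniq_endpoints U => p /(dpath_ends dP)[].
Qed.

Lemma vdisjoint_lasts P : vdisjoint e P -> uniq (map olast P).
Proof.
by case/andP=> dP U; apply: uniq_endpoints U => p /(dpath_ends dP)[].
Qed.

Lemma vdisjoint_uniq P : vdisjoint e P -> uniq P.
Proof. by move/vdisjoint_heads/map_uniq. Qed.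

Lemma endpoints_card (f : seq T -> option T) P (A : {set T}) :
  uniq (map f P) -> {in P, forall p, exists2 x, f p = Some x & x \in A} ->
  size P <= #|A| /\ (#|A| <= size P -> {in A, forall x, Some x \in map f P}).
Proof.
move=> U fA.
have sub : {subset map f P <= map Some (enum A)}.
  by move=> _ /mapP[p /fA[x -> xA] ->]; rewrite map_f ?mem_enum.
have -> : #|A| = size (map Some (enum A)) by rewrite size_map cardE.
rewrite -(size_map f); split; first exact: uniq_leq_size.
by move=> le x xA; have [_ ->] := uniq_min_size U sub le; rewrite map_f ?mem_enum.
Qed.

Section IOPaths.
Variables (I O : {set T}) (P : seq (seq T)).
Hypothesis P_paths : disjoint_IO_paths e I O P.

Lemma IO_paths_vdisjoint : vdisjoint e P.
Proof.
case/andP: P_paths => /allP IO U; rewrite /vdisjoint U andbT.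
by apply/allP => -[|a s] /IO //= /and3P[].
Qed.

Lemma IO_paths_ends :
  {in P, forall p, (exists2 x, ohead p = Some x & x \in I) /\
                   (exists2 x, olast p = Some x & x \in O)}.
Proof.
case/andP: P_paths => /allP IO _ [|a s] /IO //= /and3P[_ aI lO].
by split; [exists a | exists (last a s)].
Qed.

Lemma IO_paths_size : size P <= #|I|.
Proof.
have U := vdisjoint_heads IO_paths_vdisjoint.
by case: (endpoints_card U (fun p pP => (IO_paths_ends pP).1)).
Qed.

Lemma IO_paths_lasts : #|O| <= size P -> {in O, forall x, Some x \in map olast P}.
Proof.
have U := vdisjoint_lasts IO_paths_vdisjoint.
by case: (endpoints_card U (fun p pP => (IO_paths_ends pP).2)).
Qed.

Lemma IO_paths_pred y : y \in flatten P -> y \notin I -> arc P (pred_on P y) y.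
Proof.
case/flattenP => p pP yp yNI; have /andP[dP U] := IO_paths_vdisjoint.
case/(dpath_cons dP): (pP) => a [s pE]; subst p.
have [[_ [<-] aI] _] := IO_paths_ends pP.
move: yp; rewrite inE => /orP[/eqP ya|ys]; first by rewrite ya aI in yNI.
have [u uy] := behead_arc a ys.
by rewrite (arc_pred_on U (x := u)) //; apply/arcP; exists a, s.
Qed.

End IOPaths.

Lemma no_arc_from_last P p u :
  vdisjoint e P -> p \in P -> olast p = Some u -> forall w, ~~ arc P u w.
Proof.
case/andP=> dP U pP; case/(dpath_cons dP): (pP) => a [s pE]; subst p => -[<-] w.
apply/arcP => -[a' [s' [pP' uw]]].
have E : a' :: s' = a :: s.
  exact: flatten_mem_unique U pP' pP (mem_belast (arc_tail_belast uw)) (mem_last a s).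
case: E uw => -> -> /arc_tail_belast.
by have := flatten_uniq_mem U pP; rewrite lastI rcons_uniq => /andP[/negP].
Qed.

End DisjointPaths.

Arguments olast {T} p.

Section PathCover.
Variables (T : finType) (e : rel T) (I O : {set T}) (C : seq (seq T)).
Hypothesis C_cover : path_cover e I O C.

Lemma cover_vdisjoint : vdisjoint e C.
Proof.
case: C_cover => dC [cntC _]; rewrite /vdisjoint dC; apply: count_mem_uniq => x.
have /hasP[p pC xp] : has (fun p => x \in p) C by rewrite has_count cntC.
have -> : x \in flatten C by apply/flattenP; exists p.
rewrite count_flatten (_ : true = 1 :> nat) // -(cntC x) -sumn_count.
congr sumn; apply/eq_in_map => q qC.
by case/(dpath_cons dC): (qC) (allP dC _ qC) => a [s ->] /andP[_ /count_uniq_mem->].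
Qed.

Lemma cover_mem v : exists a s, a :: s \in C /\ v \in a :: s.
Proof.
case: C_cover => dC [cntC _].
have /hasP[p pC vp] : has (fun p => v \in p) C by rewrite has_count cntC.
by case/(dpath_cons dC): (pC) => a [s pE]; subst p; exists a, s.
Qed.

Lemma cover_last a s : a :: s \in C -> last a s \in O.
Proof. by case: C_cover => _ [_ ends] pC; case: (ends _ pC a s erefl) => _ []. Qed.

Lemma cover_I_head a s v : a :: s \in C -> v \in a :: s -> v \in I -> v = a.
Proof.
case: C_cover => _ [_ ends] pC; rewrite inE => /orP[/eqP //|vs] vI.
by have [sNI _] := ends _ pC a s erefl; move: (sNI _ vs); rewrite vI.
Qed.

Lemma cover_arc_notI u w : arc C u w -> w \notin I.
Proof.
case: C_cover => _ [_ ends] /arcP[a [s [pC uw]]].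
by have [sNI _] := ends _ pC a s erefl; apply: sNI (arc_head_behead uw).
Qed.

Lemma cover_succ_arc v : v \notin O -> arc C v (succ_on C v).
Proof.
move=> vNO; have [a [s [pC vp]]] := cover_mem v.
move: vp; rewrite lastI mem_rcons inE => /orP[/eqP vl|/belast_arc[w vw]].
  by rewrite vl (cover_last pC) in vNO.
have vw' : arc C v w by apply/arcP; exists a, s.
by rewrite (arc_succ_on (proj2 (andP cover_vdisjoint)) vw').
Qed.

Lemma cover_succ_inj x x' :
  x \notin O -> x' \notin O -> succ_on C x = succ_on C x' -> x = x'.
Proof.
move=> xNO x'NO E; have /andP[_ U] := cover_vdisjoint.
by apply: arc_pred_unique U (cover_succ_arc xNO) _; rewrite E cover_succ_arc.
Qed.

(* When |I| = |O|, the cover consists of exactly |I| disjoint I-O paths: its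
   paths end in O, so there are at most |O| = |I| of them, and each vertex of
   I starts one of them. *)
Lemma cover_IO_paths :
  #|I| = #|O| -> disjoint_IO_paths e I O C /\ size C = #|I|.
Proof.
move=> cardIO; have /andP[dC U] := cover_vdisjoint.
have lastO p : p \in C -> exists2 x, olast p = Some x & x \in O.
  move=> pC; case/(dpath_cons dC): (pC) => a [s pE]; subst p.
  by exists (last a s); rewrite ?cover_last.
have le_C : size (map ohead C) <= size (map Some (enum I)).
  rewrite !size_map -cardE cardIO.
  exact: (endpoints_card (vdisjoint_lasts cover_vdisjoint) lastO).1.
have sub : {subset map Some (enum I) <= map ohead C}.
  move=> y /mapP[x]; rewrite mem_enum => xI ->.
  have [a [s [pC xp]]] := cover_mem x.
  by rewrite (cover_I_head pC xp xI); apply: (map_f ohead pC).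
have uI : uniq (map Some (enum I)) by rewrite (map_inj_uniq Some_inj) enum_uniq.
have [sizeC headsI] := uniq_min_size uI sub le_C.
split; last by rewrite -(size_map ohead) -sizeC size_map cardE.
rewrite /disjoint_IO_paths U andbT; apply/allP => p pC.
case/(dpath_cons dC): (pC) => a [s pE]; subst p.
have /mapP[x xI [ax]] : Some a \in map Some (enum I) by rewrite headsI (map_f ohead pC).
rewrite mem_enum in xI.
by apply/and3P; split; [exact: (allP dC _ pC) | rewrite ax | exact: cover_last].
Qed.
End PathCover.

Section Influence.
Variables (T : finType) (e : rel T) (P : seq (seq T)).

Definition influences (x y : T) : Prop :=
  exists s, s <> [::] /\ path (inf_seg e P) x s /\ last x s = y.

Lemma influences_trans x y z : influences x y -> influences y z -> influences x z.
Proof.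
move=> [s [s0 [xs sy]]] [t [t0 [yt tz]]]; exists (s ++ t); split.
  by case: s s0 {xs sy}.
by rewrite cat_path last_cat sy xs.
Qed.

Lemma influences_vicious x : influences x x -> has_vicious_circuit e P.
Proof. by move=> [s sx]; exists x, s. Qed.

(* A segment of type (i), and a segment of type (i) followed by an edge: the
   latter is a segment of type (ii) when the edge is uncovered, and two
   segments of type (i) otherwise. *)
Lemma arc_influences x z : arc P x z -> influences x z.
Proof. by move=> xz; exists [:: z]; rewrite /= /inf_seg xz. Qed.

Lemma arc_edge_influences x z y :
  uniq (flatten P) -> arc P x z -> e z y -> y != x -> influences x y.
Proof.
move=> U xz zy yNx; case cov: (covered P z y).
  case/orP: cov => [zy'|yz]; last by rewrite (arc_pred_unique U yz xz) eqxx in yNx.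
  by exists [:: z; y]; rewrite /= /inf_seg xz zy'.
exists [:: y]; split=> //=; split=> //; rewrite andbT /inf_seg.
by apply/orP; right; apply/existsP; exists z; rewrite xz zy cov.
Qed.

End Influence.

(* If every point moved by an injection F of a finite type is related to its
   image by a transitive relation R, then every moved point is related to
   itself: follow its F-orbit around. *)
Lemma injective_orbit_loop (T : finType) (F : T -> T) (R : T -> T -> Prop) :
  injective F -> (forall x y z, R x y -> R y z -> R x z) ->
  (forall x, F x != x -> R x (F x)) -> forall x, F x != x -> R x x.
Proof.
move=> Finj Rtrans Rstep x Fx.
have orbit_related k : R x (iter k.+1 F x).
  elim: k => [|k IH]; first exact: Rstep.
  rewrite iterS; have [->|moved] := eqVneq (F (iter k.+1 F x)) (iter k.+1 F x).
    exact: IH.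
  exact: Rtrans IH (Rstep _ moved).
by have := orbit_related (order F x).-1; rewrite prednK ?order_gt0 // iter_order.
Qed.

Section Rerouting.
Variables (T : finType) (e : rel T) (I O : {set T}) (C D : seq (seq T)).
Hypotheses (e_sym : symmetric e) (e_irr : irreflexive e).
Hypotheses (C_cover : path_cover e I O C) (C_causal : ~ has_vicious_circuit e C).
Hypothesis D_paths : disjoint_IO_paths e I O D.
Hypothesis D_ends : {in O, forall x, Some x \in map olast D}.

Let UC : uniq (flatten C) := proj2 (andP (cover_vdisjoint C_cover)).
Let UD : uniq (flatten D) := proj2 (andP D_paths).
Let dD : all (dpath e) D := proj1 (andP (IO_paths_vdisjoint D_paths)).

Definition reroute (x : T) : T :=
  if x \in O then x
  else if succ_on C x \in flatten D then pred_on D (succ_on C x)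
  else succ_on C x.

(* No arc of D leaves O, since every vertex of O ends a path of D. *)
Lemma D_arc_notO u w : arc D u w -> u \notin O.
Proof.
move=> uw; apply/negP => /D_ends /mapP[p pD lp].
by have := no_arc_from_last (IO_paths_vdisjoint D_paths) pD (esym lp) w; rewrite uw.
Qed.

Lemma O_sub_D : {subset O <= flatten D}.
Proof.
move=> x /D_ends /mapP[p pD]; case/(dpath_cons dD): (pD) => a [s pE]; subst p.
by move=> [->]; apply/flattenP; exists (a :: s); rewrite ?mem_last.
Qed.

Lemma reroute_D_arc x : x \notin O -> succ_on C x \in flatten D ->
  arc D (reroute x) (succ_on C x).
Proof.
move=> xNO sD; rewrite /reroute (negPf xNO) sD.
apply: (IO_paths_pred D_paths sD).
exact (cover_arc_notI C_cover (cover_succ_arc C_cover xNO)).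
Qed.

Lemma reroute_memO x : (reroute x \in O) = (x \in O).
Proof.
case: (boolP (x \in O)) => [xO|xNO]; first by rewrite /reroute xO.
apply/negbTE; case: (boolP (succ_on C x \in flatten D)) => sD.
  exact: D_arc_notO (reroute_D_arc xNO sD).
by rewrite /reroute (negPf xNO) (negPf sD); apply: contra sD; apply: O_sub_D.
Qed.

Lemma reroute_undo x : x \notin O ->
  (if reroute x \in flatten D then succ_on D (reroute x) else reroute x) = succ_on C x.
Proof.
move=> xNO; case: (boolP (succ_on C x \in flatten D)) => sD.
  have xs := reroute_D_arc xNO sD.
  by rewrite (arc_mem_flatten xs).1 (arc_succ_on UD xs).
by rewrite /reroute (negPf xNO) !(negPf sD).
Qed.

Lemma reroute_inj : injective reroute.
Proof.
move=> x x' E; have := reroute_memO x; rewrite E reroute_memO.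
case: (boolP (x \in O)) => [xO x'O|xNO /negbT x'NO].
  by rewrite /reroute xO x'O in E.
apply: (cover_succ_inj C_cover xNO x'NO).
by rewrite -reroute_undo // E reroute_undo.
Qed.

Lemma reroute_influences x : reroute x != x -> influences e C x (reroute x).
Proof.
case: (boolP (x \in O)) => [xO|xNO]; first by rewrite /reroute xO eqxx.
have xs := cover_succ_arc C_cover xNO.
case: (boolP (succ_on C x \in flatten D)) => sD; last first.
  by rewrite /reroute (negPf xNO) (negPf sD) => _; apply: arc_influences.
move=> moved; apply: arc_edge_influences UC xs _ moved.
by rewrite e_sym; apply: arc_edge dD (reroute_D_arc xNO sD).
Qed.

(* Since C has no vicious circuit, reroute moves no vertex. *)
Lemma reroute_id x : reroute x = x.
Proof.
apply/eqP; apply/negPn/negP => moved; apply: C_causal.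
apply: (influences_vicious (x := x)).
exact: injective_orbit_loop reroute_inj (@influences_trans _ e C)
  reroute_influences x moved.
Qed.

(* Hence every arc of D steps to the successor on C: if the C-successor of u
   were off D, reroute u = u would be adjacent to itself. *)
Lemma D_arc_succ u w : arc D u w -> succ_on C u = w.
Proof.
move=> uw; have uNO := D_arc_notO uw; have us := cover_succ_arc C_cover uNO.
case: (boolP (succ_on C u \in flatten D)) => sD.
  have uD := reroute_D_arc uNO sD; rewrite reroute_id in uD.
  exact: arc_succ_unique UD uD uw.
have := reroute_id u; rewrite /reroute (negPf uNO) (negPf sD) => su.
by move: (arc_edge (proj1 C_cover) us); rewrite su e_irr.
Qed.

(* So every path of D, following C from its start in I until it first meets
   O, is the path of C through that start. *)
Lemma D_sub_C : {subset D <= C}.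
Proof.
move=> p pD; case/(dpath_cons dD): (pD) => a [s pE]; subst p.
have [[_ [<-] aI] [_ [<-] lO]] := IO_paths_ends D_paths pD.
have [a' [s' [pC ap]]] := cover_mem C_cover a.
have aE := cover_I_head C_cover pC ap aI; subst a'.
have [_ [_ ends]] := C_cover; have [_ [lO' bNO']] := ends _ pC a s' erefl.
suff -> : s = s' by [].
apply: (fpath_first_hit_unique (g := succ_on C) (Q := mem O) (a := a)) => //.
- by apply/path_arcsP => u w uw; apply/eqP/D_arc_succ; apply/arcP; exists a, s.
- by move=> v /belast_arc[w vw]; apply: (D_arc_notO (w := w)); apply/arcP; exists a, s.
- by apply/path_arcsP => u w uw; apply/eqP/(arc_succ_on UC); apply/arcP; exists a, s'.
Qed.

End Rerouting.

Theorem mainTheorem11 (T : finType) (e : rel T)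
    (e_sym : symmetric e) (e_irr : irreflexive e)
    (I O : {set T}) (C : seq (seq T)) :
  #|I| = #|O| ->
  causal_path_cover e I O C ->
  (disjoint_IO_paths e I O C /\
   (forall D, disjoint_IO_paths e I O D -> size D <= size C)) /\
  (forall D, disjoint_IO_paths e I O D ->
     (forall D', disjoint_IO_paths e I O D' -> size D' <= size D) ->
     perm_eq D C).
Proof.
move=> cardIO [C_cover C_causal].
have [C_paths sizeC] := cover_IO_paths C_cover cardIO.
have C_max D : disjoint_IO_paths e I O D -> size D <= size C.
  by move=> D_paths; rewrite sizeC; apply: IO_paths_size D_paths.
split=> // D D_paths D_max.
have D_ends : {in O, forall x, Some x \in map olast D}.
  by apply: IO_paths_lasts D_paths _; rewrite -cardIO -sizeC D_max.
have D_sub := D_sub_C e_sym e_irr C_cover C_causal D_paths D_ends.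
have uD := vdisjoint_uniq (IO_paths_vdisjoint D_paths).
have uC := vdisjoint_uniq (IO_paths_vdisjoint C_paths).
by apply: uniq_perm => //; apply: (uniq_min_size uD D_sub (D_max C C_paths)).2.
Qed.
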